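(* Let $r$, $w$, and $t$ be positive integers with $t \geq r+w$. Let $t'$ be an integer with $0 \le t' \le t$ at which the function $x \mapsto \binom{x}{r}\binom{t-x}{w}$, defined on the integers $0 \le x \le t$, attains its maximum. If $d=\binom{t-r-w}{t'-r}$, then $$N((r,w;d),t)=bc_{d}(I_{t}(r,w))=bp_{d}(I_{t}(r,w))=\binom{t}{t'}.$$
   Context: Let $d,n,t,r,w$ be positive integers. A pair $(X,\mathcal B)$, where $X$ is a set of $n$ points and $\mathcal B=\{B_1,\ldots,B_t\}$ is a collection of $t$ subsets (blocks) of $X$, is an $(r,w;d)$-cover-free family with $t$ blocks if for any two sets of indices $L,M\subseteq\{1,\ldots,t\}$ with $L\cap M=\emptyset$, $|L|=r$, $|M|=w$, one has $\left|\left(\bigcap_{l\in L}B_l\right)\setminus\left(\bigcup_{m\in M}B_m\right)\right|\ge d$. $N((r,w;d),t)$ denotes the minimum number of points $|X|$ of an $(r,w;d)$-cover-free family having $t$ blocks. The bi-intersection graph $I_t(r,w)$ is the bipartite graph whose vertices are all $r$-subsets and all $w$-subsets of $\{1,\ldots,t\}$ (one part consisting of the $r$-subsets, the other of the $w$-subsets), where an $r$-subset is adjacent to a $w$-subset if and only if they are disjoint. A biclique of a graph $G$ is a complete bipartite subgraph of $G$. The $d$-biclique covering number $bc_d(G)$ (resp. $d$-biclique partition number $bp_d(G)$) is the minimum number of bicliques of $G$ such that every edge of $G$ belongs to at least $d$ (resp. exactly $d$) of these bicliques. Binomial coefficients $\binom{a}{b}$ are $0$ when $b<0$ or $b>a$.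 *)

From mathcomp Require Import all_boot.
Set Implicit Arguments. Unset Strict Implicit. Unset Printing Implicit Defensive.

Definition is_minimum (P : nat -> Prop) (m : nat) : Prop :=
  P m /\ (forall k, P k -> m <= k).

Definition is_cff (r w d t n : nat) (B : 'I_t -> {set 'I_n}) : Prop :=
  forall L M : {set 'I_t}, [disjoint L & M] -> #|L| = r -> #|M| = w ->
    d <= #|(\bigcap_(l in L) B l) :\: (\bigcup_(m in M) B m)|.

Definition N_cff (r w d t : nat) (n : nat) : Prop :=
  is_minimum (fun n' => exists B : 'I_t -> {set 'I_n'}, @is_cff r w d t n' B) n.

(* Bi-intersection graph I_t(r,w): left part = r-subsets of 'I_t,
   right part = w-subsets of 'I_t; edge (A,C) iff A, C disjoint. *)
Definition bi_edge (t r w : nat) (A C : {set 'I_t}) : bool :=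
  [&& #|A| == r, #|C| == w & [disjoint A & C]].

Definition is_biclique (t r w : nat) (S T : {set {set 'I_t}}) : Prop :=
  (forall A, A \in S -> #|A| = r) /\ (forall C, C \in T -> #|C| = w) /\
  (forall A C, A \in S -> C \in T -> [disjoint A & C]).

Definition edge_mult (t k : nat) (F : 'I_k -> {set {set 'I_t}} * {set {set 'I_t}})
  (A C : {set 'I_t}) : nat :=
  #|[set i : 'I_k | (A \in (F i).1) && (C \in (F i).2)]|.

Definition is_d_biclique_cover (t r w d k : nat)
  (F : 'I_k -> {set {set 'I_t}} * {set {set 'I_t}}) : Prop :=
  (forall i, @is_biclique t r w (F i).1 (F i).2) /\
  (forall A C, @bi_edge t r w A C -> d <= edge_mult F A C).

Definition is_d_biclique_partition (t r w d k : nat)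
  (F : 'I_k -> {set {set 'I_t}} * {set {set 'I_t}}) : Prop :=
  (forall i, @is_biclique t r w (F i).1 (F i).2) /\
  (forall A C, @bi_edge t r w A C -> edge_mult F A C = d).

Definition bc_d (t r w d : nat) (m : nat) : Prop :=
  is_minimum (fun k => exists F, @is_d_biclique_cover t r w d k F) m.

Definition bp_d (t r w d : nat) (m : nat) : Prop :=
  is_minimum (fun k => exists F, @is_d_biclique_partition t r w d k F) m.

(* binomial with the convention C(a,b) = 0 for b < 0: C(a, b - c) for integer b - c *)
Definition binom_sub (a b c : nat) : nat := if c <= b then 'C(a, b - c) else 0.

From mathcomp Require Import all_boot zify ring.
Set Implicit Arguments. Unset Strict Implicit. Unset Printing Implicit Defensive.

(** Every biclique of I_t(r,w) sits inside the complete bipartite graph between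
    the r-subsets of some X and the w-subsets of its complement, so it has at most
    C(|X|,r) C(t-|X|,w) <= C(t',r) C(t-t',w) edges.  A d-cover covers each of the
    C(t,r) C(t-r,w) edges d times, and the identity
    C(t,t') C(t',r) C(t-t',w) = C(t,r) C(t-r,w) d forces at least C(t,t') bicliques.
    A cover-free family with n points gives a d-cover with n bicliques, one per
    point x: the r-sets inside, and the w-sets outside, the set of blocks containing x.
    Conversely, one biclique per t'-subset K of {1..t} covers an edge (L, M) once for
    each K containing L and avoiding M, that is exactly d times; read dually, the
    t'-subsets are the point traces of a cover-free family with C(t,t') points. *)

(* Both sides count the triples (K, R, W) with R \subset K and W disjoint from K. *)
Lemma bin_nested_choice n k r w : r <= k <= n -> w <= n - k ->
  'C(n, k) * ('C(k, r) * 'C(n - k, w)) = 'C(n, r) * 'C(n - r, w) * 'C(n - r - w, k - r).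
Proof.
move=> rk wnk.
have [b kE] : exists b, k = r + b by exists (k - r); lia.
have [e nE] : exists e, n = r + b + w + e by exists (n - k - w); lia.
subst k n; clear rk wnk.
have -> : r + b + w + e - (r + b) = w + e by lia.
have -> : r + b + w + e - r - w = b + e by lia.
have -> : r + b + w + e - r = b + w + e by lia.
have -> : r + b - r = b by lia.
have binD_fact m p : 'C(m + p, m) * (m`! * p`!) = (m + p)`!.
  by rewrite -{2}(addKn m p) bin_fact // leq_addr.
have facts_gt0 : 0 < r`! * b`! * w`! * e`! by rewrite !muln_gt0 !fact_gt0.
apply/eqP; rewrite -(eqn_pmul2r facts_gt0); apply/eqP.
have nE1 := binD_fact (r + b) (w + e); rewrite addnA in nE1.
have nE2 := binD_fact r (b + w + e); rewrite !addnA in nE2.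
have nE3 := binD_fact w (b + e); rewrite addnCA addnA in nE3.
transitivity (r + b + w + e)`!.
  by rewrite -nE1 -(binD_fact r b) -(binD_fact w e); ring.
by rewrite -nE2 -nE3 -(binD_fact b e); ring.
Qed.

Lemma cardsU_disjoint (T : finType) (A B : {set T}) :
  [disjoint A & B] -> #|A :|: B| = #|A| + #|B|.
Proof. by move=> dAB; rewrite cardsU disjoint_setI0 // cards0 subn0. Qed.

Lemma card_sets_containing_avoiding (T : finType) (L M : {set T}) k :
  [disjoint L & M] -> #|L| <= k ->
  #|[set S : {set T} | [&& #|S| == k, L \subset S & [disjoint M & S]]]|
  = 'C(#|T| - #|L| - #|M|, k - #|L|).
Proof.
move=> dLM Lk; set R := ~: (L :|: M).
have cR : #|R| = #|T| - #|L| - #|M|.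
  by have := cardsC (L :|: M); rewrite cardsU_disjoint // -/R; lia.
have disjR (X : {set T}) : X \subset R -> [disjoint X & L] && [disjoint X & M].
  by rewrite /R setCU subsetI -!disjoints_subset.
rewrite -cR -cards_draws -[in RHS](@card_in_imset _ _ (fun X => X :|: L)); last first.
  move=> X Y; rewrite !inE => /andP[XR _] /andP[YR _].
  have /andP[XL _] := disjR X XR; have /andP[YL _] := disjR Y YR.
  move/(congr1 (fun Z => Z :\: L)); rewrite !setDUl setDv !setU0.
  by rewrite (setDidPl XL) (setDidPl YL).
apply: eq_card => S; rewrite inE; apply/idP/imsetP.
  case/and3P => /eqP cS LS dMS; exists (S :\: L).
    rewrite inE cardsD (setIidPr LS) cS eqxx andbT.
    rewrite /R setCU subsetI setDE subsetIr /=.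
    by apply: subset_trans (subsetIl _ _) _; rewrite -disjoints_subset disjoint_sym.
  by rewrite setDE setUIl (setUC (~: L)) setUCr setIT (setUidPl LS).
case=> X; rewrite inE => /andP[/disjR/andP[XL XM] /eqP cX] ->.
rewrite cardsU_disjoint // cX subnK // eqxx subsetUr /=.
by rewrite disjoints_subset setCU subsetI -!disjoints_subset !(disjoint_sym M) XM.
Qed.

Lemma biclique_card_le t r w (S T : {set {set 'I_t}}) : @is_biclique t r w S T ->
  exists2 x, x <= t & #|S| * #|T| <= 'C(x, r) * 'C(t - x, w).
Proof.
move=> [cS [cT dST]].
set U := \bigcup_(A in S) A; set V := \bigcup_(C in T) C.
have leS : #|S| <= 'C(#|U|, r).
  rewrite -cards_draws; apply/subset_leq_card/subsetP => A AS.
  by rewrite inE cS // eqxx andbT; apply: bigcup_sup.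
have leT : #|T| <= 'C(#|V|, w).
  rewrite -cards_draws; apply/subset_leq_card/subsetP => C CT.
  by rewrite inE cT // eqxx andbT; apply: bigcup_sup.
have VU : V \subset ~: U.
  rewrite -disjoints_subset disjoint_sym; apply: bigcup_disjoint => C CT.
  by rewrite disjoint_sym; apply: bigcup_disjoint => A AS; rewrite disjoint_sym dST.
have leV : #|V| <= t - #|U|.
  by have := cardsC U; have := subset_leq_card VU; rewrite card_ord; lia.
exists #|U|; first by rewrite -[t in _ <= t]card_ord max_card.
by apply: leq_mul => //; apply: leq_trans leT (leq_bin2l _ leV).
Qed.

Lemma card_bi_edges t r w :
  #|[set p : {set 'I_t} * {set 'I_t} | bi_edge r w p.1 p.2]| = 'C(t, r) * 'C(t - r, w).
Proof.
rewrite -sum1dep_card -(pair_big_dep (fun A : {set 'I_t} => #|A| == r)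
  (fun A (C : {set 'I_t}) => (#|C| == w) && [disjoint A & C]) (fun _ _ => 1)) /=.
rewrite (eq_bigr (fun=> 'C(t - r, w))) => [|A /eqP cA].
  by rewrite sum_nat_cond_const card_draws card_ord.
have cCA : #|~: A| = t - r by have := cardsC A; rewrite card_ord cA; lia.
rewrite sum1dep_card -cCA -cards_draws.
by apply: eq_card => C; rewrite !inE andbC disjoint_sym disjoints_subset.
Qed.

Lemma sum_edge_mult t k (F : 'I_k -> {set {set 'I_t}} * {set {set 'I_t}}) :
  \sum_(p : {set 'I_t} * {set 'I_t}) edge_mult F p.1 p.2
  = \sum_(i < k) #|(F i).1| * #|(F i).2|.
Proof.
under eq_bigr => p _ do rewrite /edge_mult -sum1dep_card.
rewrite (exchange_big_dep xpredT) //=; apply: eq_bigr => i _.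
by rewrite sum1dep_card -cardsX; apply: eq_card => -[A C]; rewrite !inE.
Qed.

Lemma cover_edges_le t r w d k F m :
  (forall x, x <= t -> 'C(x, r) * 'C(t - x, w) <= m) ->
  @is_d_biclique_cover t r w d k F -> 'C(t, r) * 'C(t - r, w) * d <= k * m.
Proof.
move=> bound [bicl mult].
rewrite -card_bi_edges -sum_nat_cond_const.
apply: (@leq_trans (\sum_(p | bi_edge r w p.1 p.2) edge_mult F p.1 p.2)).
  by apply: leq_sum => p /mult.
apply: (@leq_trans (\sum_p edge_mult F p.1 p.2)).
  by rewrite [X in X <= _]big_mkcond; apply: leq_sum => p _; case: ifP.
rewrite sum_edge_mult -[k in k * m]card_ord -sum_nat_const; apply: leq_sum => i _.
by have [x xt le] := biclique_card_le (bicl i); apply: leq_trans le (bound x xt).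
Qed.

Section SetSystems.
Variables t n : nat.

Definition separators (S : 'I_n -> {set 'I_t}) (L M : {set 'I_t}) : {set 'I_n} :=
  [set x | (L \subset S x) && [disjoint M & S x]].

Definition traces (B : 'I_t -> {set 'I_n}) (x : 'I_n) : {set 'I_t} := [set i | x \in B i].

Definition blocks (S : 'I_n -> {set 'I_t}) (i : 'I_t) : {set 'I_n} := [set x | i \in S x].

Lemma traces_blocks S x : traces (blocks S) x = S x.
Proof. by apply/setP => i; rewrite !inE. Qed.

Lemma card_cff_cell (B : 'I_t -> {set 'I_n}) (L M : {set 'I_t}) :
  #|(\bigcap_(l in L) B l) :\: (\bigcup_(m in M) B m)| = #|separators (traces B) L M|.
Proof.
apply: eq_card => x; rewrite !inE andbC; congr andb.
  apply/bigcapP/subsetP => [xB l lL | LB l lL]; first by rewrite inE xB.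
  by have := LB l lL; rewrite inE.
rewrite -[RHS]negbK; congr negb.
apply/bigcupP/pred0Pn => [[m mM xm] | [m /= /andP[mM]]].
  by exists m; rewrite /= mM inE.
by rewrite inE => xm; exists m.
Qed.

Variables r w : nat.

Definition subset_biclique (S : {set 'I_t}) : {set {set 'I_t}} * {set {set 'I_t}} :=
  ([set A : {set 'I_t} | (#|A| == r) && (A \subset S)],
   [set C : {set 'I_t} | (#|C| == w) && [disjoint C & S]]).

Lemma subset_biclique_is_biclique S :
  is_biclique r w (subset_biclique S).1 (subset_biclique S).2.
Proof.
split; [|split].
- by move=> A; rewrite inE => /andP[/eqP].
- by move=> C; rewrite inE => /andP[/eqP].
move=> A C; rewrite !inE => /andP[_ AS] /andP[_ dCS].
by rewrite disjoint_sym; apply: disjointWr AS dCS.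
Qed.

Lemma edge_mult_subset_bicliques (S : 'I_n -> {set 'I_t}) (A C : {set 'I_t}) :
  #|A| = r -> #|C| = w ->
  edge_mult (fun x => subset_biclique (S x)) A C = #|separators S A C|.
Proof. by move=> cA cC; apply: eq_card => x; rewrite !inE cA cC !eqxx. Qed.

End SetSystems.

Lemma partition_cover t r w d k (F : 'I_k -> {set {set 'I_t}} * {set {set 'I_t}}) :
  @is_d_biclique_partition t r w d k F -> @is_d_biclique_cover t r w d k F.
Proof. by case=> bicl mult; split=> // A C /mult ->. Qed.

Lemma cff_cover r w d t n (B : 'I_t -> {set 'I_n}) :
  @is_cff r w d t n B ->
  @is_d_biclique_cover t r w d n (fun x => subset_biclique r w (traces B x)).
Proof.
move=> cff; split=> [x | A C /and3P[/eqP cA /eqP cC dAC]].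
  exact: subset_biclique_is_biclique.
by rewrite edge_mult_subset_bicliques // -card_cff_cell; apply: cff.
Qed.

Lemma separators_partition t n r w d (S : 'I_n -> {set 'I_t}) :
  (forall L M : {set 'I_t},
     [disjoint L & M] -> #|L| = r -> #|M| = w -> #|separators S L M| = d) ->
  @is_d_biclique_partition t r w d n (fun x => subset_biclique r w (S x)).
Proof.
move=> sepS; split=> [x | A C /and3P[/eqP cA /eqP cC dAC]].
  exact: subset_biclique_is_biclique.
by rewrite edge_mult_subset_bicliques // sepS.
Qed.

Lemma separators_cff t n r w d (S : 'I_n -> {set 'I_t}) :
  (forall L M : {set 'I_t},
     [disjoint L & M] -> #|L| = r -> #|M| = w -> d <= #|separators S L M|) ->
  @is_cff r w d t n (blocks S).
Proof.
move=> sepS L M dLM cL cM; rewrite card_cff_cell.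
by rewrite (eq_card (B := separators S L M)) ?sepS // => x; rewrite !inE !traces_blocks.
Qed.

Lemma card_enum_val_pred (T : finType) (D : {set T}) (P : pred T) :
  #|[set x : 'I_#|D| | P (enum_val x)]| = #|[set y in D | P y]|.
Proof.
rewrite -(card_imset _ enum_val_inj); apply: eq_card => y.
apply/imsetP/idP => [[x + ->] | ]; first by rewrite !inE enum_valP.
rewrite inE => /andP[yD Py]; exists (enum_rank_in yD y); last by rewrite enum_rankK_in.
by rewrite inE enum_rankK_in.
Qed.

Lemma exists_ksets_separators t k : exists S : 'I_'C(t, k) -> {set 'I_t},
  forall L M : {set 'I_t}, [disjoint L & M] -> #|L| <= k ->
  #|separators S L M| = 'C(t - #|L| - #|M|, k - #|L|).
Proof.
set D := [set S : {set 'I_t} | #|S| == k].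
have <- : #|D| = 'C(t, k) by rewrite card_draws card_ord.
exists (fun x => enum_val x) => L M dLM Lk.
rewrite (card_enum_val_pred D (fun S => (L \subset S) && [disjoint M & S])).
rewrite -[t in 'C(t - _ - _, _)]card_ord -card_sets_containing_avoiding //.
by apply: eq_card => S; rewrite !inE.
Qed.

Lemma bin_prod_max_gt0 r w t t' : r + w <= t ->
  (forall x, x <= t -> 'C(x, r) * 'C(t - x, w) <= 'C(t', r) * 'C(t - t', w)) ->
  0 < 'C(t', r) * 'C(t - t', w).
Proof.
by move=> rwt tmax; apply: leq_trans (tmax r _); rewrite ?binn ?mul1n ?bin_gt0; lia.
Qed.

Lemma d_cover_card_ge r w t t' k F : r + w <= t -> t' <= t ->
  (forall x, x <= t -> 'C(x, r) * 'C(t - x, w) <= 'C(t', r) * 'C(t - t', w)) ->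
  @is_d_biclique_cover t r w 'C(t - r - w, t' - r) k F -> 'C(t, t') <= k.
Proof.
move=> rwt t't tmax cover; have pos := bin_prod_max_gt0 rwt tmax.
have /andP[rt' wt'] : (r <= t') && (w <= t - t') by move: pos; rewrite muln_gt0 !bin_gt0.
by have := cover_edges_le tmax cover; rewrite -bin_nested_choice ?rt' // leq_pmul2r.
Qed.

Theorem theorem1 (r w t t' : nat) :
  0 < r -> 0 < w -> 0 < t -> r + w <= t ->
  t' <= t ->
  (forall x, x <= t -> 'C(x, r) * 'C(t - x, w) <= 'C(t', r) * 'C(t - t', w)) ->
  let d := binom_sub (t - r - w) t' r in
  N_cff r w d t 'C(t, t') /\ bc_d t r w d 'C(t, t') /\ bp_d t r w d 'C(t, t').
Proof.
move=> _ _ _ rwt t't tmax d.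
have rt' : r <= t'.
  by have := bin_prod_max_gt0 rwt tmax; rewrite muln_gt0 bin_gt0 => /andP[].
have dE : d = 'C(t - r - w, t' - r) by rewrite /d /binom_sub rt'.
have lower k F : @is_d_biclique_cover t r w d k F -> 'C(t, t') <= k.
  by rewrite dE; apply: d_cover_card_ge.
have [S sepS] := exists_ksets_separators t t'.
have sepd (L M : {set 'I_t}) :
    [disjoint L & M] -> #|L| = r -> #|M| = w -> #|separators S L M| = d.
  by move=> dLM cL cM; rewrite sepS ?cL ?cM -?dE.
have part := separators_partition sepd.
split; [|split]; split.
- by exists (blocks S); apply: separators_cff => L M dLM cL cM; rewrite sepd.
- by move=> k [B /cff_cover/lower].
- by exists (fun x => subset_biclique r w (S x)); apply: partition_cover.
- by move=> k [F /lower].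
- by exists (fun x => subset_biclique r w (S x)).
- by move=> k [F /partition_cover/lower].
Qed.
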